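(* Let $w,v$ be fixed complex numbers with $\mathrm{Re}(w)\leq1$ and $w\neq1$. Then for every integer $R\geq1$, as real $n\to\infty$, \[ S_n(w;v)=U_0(w;v)+\frac{U_1(w;v)}{n}+\cdots+\frac{U_{R-1}(w;v)}{n^{R-1}}+O\!\left(\frac{1}{n^R}\right), \] with an implied constant depending only on $w$, $v$ and $R$.
   Context: For real $n>0$ with $\mathrm{Re}(n+v)>-1$, $S_n(w;v)=1+nw\int_0^1 e^{nw(1-z)}z^{n+v}\,dz$ (for integers $n\geq1$, $n+v\geq0$, $w\neq0$ it satisfies $e^{nw}=\sum_{j=0}^{n+v-1}\frac{(nw)^j}{j!}+\frac{(nw)^{n+v}}{(n+v)!}S_n(w;v)$). De Moivre polynomial $\mathcal{A}_{n,k}(a_1,a_2,\dots)$: coefficient of $x^n$ in $(a_1x+a_2x^2+\cdots)^k$. $\binom{v}{j}=v(v-1)\cdots(v-j+1)/j!$; $\delta_{r,0}$ Kronecker delta. $U_r(w;v)=\delta_{r,0}-\sum_{m=0}^{r}(-1)^m\binom{v}{r-m}\sum_{k=0}^{m}\frac{w}{(w-1)^{r+k+1}}\frac{(r+k)!}{k!}\mathcal{A}_{m,k}(\frac12,\frac13,\frac14,\dots)$. *)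

From Stdlib Require Import Reals Factorial.
From Coquelicot Require Import Coquelicot.
Open Scope R_scope.

Definition cexp (z : C) : C := (exp (Re z) * cos (Im z), exp (Re z) * sin (Im z)).

(* z^s for real z > 0 and complex s, principal branch z^s = e^{s ln z};
   set to 0 at z <= 0 (only z in [0,1] is used, and z = 0 is a single point). *)
Definition rcpow (z : R) (s : C) : C :=
  if Rlt_dec 0 z then cexp (Cmult s (RtoC (ln z))) else RtoC 0.

Definition CRInt (f : R -> C) (a b : R) : C :=
  (RInt (fun t => Re (f t)) a b, RInt (fun t => Im (f t)) a b).

Definition S_fun (n : R) (w v : C) : C :=
  Cplus (RtoC 1)
    (Cmult (Cmult (RtoC n) w)
       (CRInt (fun z => Cmult (cexp (Cmult (Cmult (RtoC n) w) (RtoC (1 - z))))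
                              (rcpow z (Cplus (RtoC n) v))) 0 1)).

Fixpoint csum (f : nat -> C) (n : nat) : C :=
  match n with
  | O => RtoC 0
  | S n' => Cplus (csum f n') (f n')
  end.

Fixpoint rsum (f : nat -> R) (n : nat) : R :=
  match n with
  | O => 0
  | S n' => rsum f n' + f n'
  end.

Fixpoint cfalling (v : C) (j : nat) : C :=
  match j with
  | O => RtoC 1
  | S j' => Cmult (cfalling v j') (Cminus v (RtoC (INR j')))
  end.
Definition cbinom (v : C) (j : nat) : C := Cdiv (cfalling v j) (RtoC (INR (Factorial.fact j))).

(* De Moivre polynomial A_{m,k}(a_1,a_2,...) = coefficient of x^m in
   (a_1 x + a_2 x^2 + ...)^k, computed via P^{k+1} = P * P^k (Cauchy product):
   A_{m,0} = delta_{m,0},  A_{m,k+1} = \sum_{j=1}^{m} a_j A_{m-j,k}. *)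
Fixpoint deMoivre (a : nat -> R) (m k : nat) : R :=
  match k with
  | O => if Nat.eqb m 0 then 1 else 0
  | S k' => rsum (fun i => a (S i) * deMoivre a (m - S i)%nat k') m
  end.

Definition harm_seq (j : nat) : R := / INR (S j).

Definition U_fun (r : nat) (w v : C) : C :=
  Cminus (RtoC (if Nat.eqb r 0 then 1 else 0))
    (csum (fun m =>
       Cmult (Cmult (RtoC ((-1) ^ m)) (cbinom v (r - m)))
         (csum (fun k =>
            Cmult (Cdiv w (Cpow (Cminus w (RtoC 1)) (r + k + 1)))
                  (RtoC (INR (Factorial.fact (r + k)) / INR (Factorial.fact k) * deMoivre harm_seq m k)))
          (S m)))
     (S r)).

From Stdlib Require Import Reals Lra Lia.
From Coquelicot Require Import Coquelicot.
Open Scope R_scope.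

(* With k = n w and a = n + v, integrate by parts M times in
   S_n = 1 + k \int_0^1 e^(k(1-z)) z^a dz, lowering the exponent of z by one at each step:
   \int e^(k(1-z)) z^(a-j) p_j(z) dz = (p_j(1) - \int e^(k(1-z)) z^(a-j-1) p_(j+1)(z) dz) / (n - k)
   for explicit polynomials p_j.  The boundary values p_j(1) are polynomials in n; their
   coefficients are those of (1 - x)^v (- log (1 - x) - x)^k, which brings in the de Moivre
   polynomials A_(m,k)(1/2, 1/3, ...) and hence the U_r.  Since
   |e^(k(1-z)) z^(a-M)| <= C e^(-n (1-z)^2 / 4) for Re w <= 1, the last integral is
   O(n^(M/2)), so with M = 2R + 2 the remainder and the terms of order r >= R are O(n^-R). *)

Lemma C_ext (a b : C) : Re a = Re b -> Im a = Im b -> a = b.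
Proof. destruct a, b; simpl; intros -> ->; reflexivity. Qed.

Lemma RtoC_neq0 (x : R) : x <> 0 -> RtoC x <> 0%C.
Proof. intros Hx H. apply Hx. now apply RtoC_inj. Qed.

Lemma im_le_Cmod (c : C) : Rabs (Im c) <= Cmod c.
Proof.
  destruct c as [a b]; unfold Cmod; simpl. rewrite <- sqrt_Rsqr_abs.
  apply sqrt_le_1_alt. unfold Rsqr. nra.
Qed.

Lemma Cmod_le_Rabs_re_im (c : C) : Cmod c <= Rabs (Re c) + Rabs (Im c).
Proof.
  destruct c as [a b]; unfold Cmod; simpl.
  assert (Ha := Rabs_pos a). assert (Hb := Rabs_pos b).
  rewrite <- (sqrt_pow2 (Rabs a + Rabs b)) by lra.
  apply sqrt_le_1_alt.
  assert (Rabs a ^ 2 = a ^ 2) by apply pow2_abs. assert (Rabs b ^ 2 = b ^ 2) by apply pow2_abs.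
  nra.
Qed.

Lemma Cmod_sub_le (x y : C) : Cmod (x - y) <= Cmod x + Cmod y.
Proof. unfold Cminus. rewrite <- (Cmod_opp y). apply Cmod_triangle. Qed.

Lemma Cmod_polar (r y : R) : 0 <= r -> Cmod (r * cos y, r * sin y) = r.
Proof.
  intros Hr. unfold Cmod; simpl.
  replace (r * cos y * (r * cos y * 1) + r * sin y * (r * sin y * 1))
    with (r ^ 2 * (Rsqr (sin y) + Rsqr (cos y))) by (unfold Rsqr; ring).
  rewrite sin2_cos2, Rmult_1_r. now apply sqrt_pow2.
Qed.

Lemma Cpow_one_minus (w : C) (p : nat) :
  ((1 - w) ^ p)%C = (RtoC ((-1) ^ p) * (w - 1) ^ p)%C.
Proof.
  induction p as [|p IH]; simpl; [ring|].
  rewrite IH, RtoC_mult. ring.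
Qed.

Lemma INR_plus_1_neq0 (j : nat) : (INR j + 1)%C <> 0%C.
Proof. rewrite <- RtoC_plus. apply RtoC_neq0. generalize (pos_INR j). lra. Qed.

Lemma pow_m1_sqr (a : nat) : (-1) ^ a * (-1) ^ a = 1.
Proof. rewrite <- Rpow_mult_distr. replace (-1 * -1) with 1 by ring. apply pow1. Qed.

Lemma pow_m1_neq0 (a : nat) : (-1) ^ a <> 0.
Proof. apply pow_nonzero. lra. Qed.

Lemma INR_fact_S (n : nat) : INR (Factorial.fact (S n)) = (INR n + 1) * INR (Factorial.fact n).
Proof. change (Factorial.fact (S n)) with (S n * Factorial.fact n)%nat. now rewrite mult_INR, S_INR. Qed.

Lemma nat_ind2 (P : nat -> Prop) : P 0%nat -> P 1%nat ->
  (forall j, P j -> P (S j) -> P (S (S j))) -> forall j, P j.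
Proof. apply Nat.pair_induction. now intros ? ? ->. Qed.

Section FiniteSums.

Implicit Types (f g : nat -> C) (n m : nat).

Lemma csum_ext f g n : (forall i, (i < n)%nat -> f i = g i) -> csum f n = csum g n.
Proof.
  induction n as [|n IH]; intros H; simpl; [reflexivity|].
  rewrite IH, H by (lia || (intros; apply H; lia)). reflexivity.
Qed.

Lemma csum_eq0 f n : (forall i, (i < n)%nat -> f i = 0%C) -> csum f n = 0%C.
Proof.
  induction n as [|n IH]; intros H; simpl; [reflexivity|].
  rewrite IH, H by (lia || (intros; apply H; lia)). ring.
Qed.

Lemma csum_plus f g n : csum (fun i => (f i + g i)%C) n = (csum f n + csum g n)%C.
Proof. induction n as [|n IH]; simpl; [ring|rewrite IH; ring]. Qed.

Lemma csum_scal (c : C) f n : csum (fun i => (c * f i)%C) n = (c * csum f n)%C.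
Proof. induction n as [|n IH]; simpl; [ring|rewrite IH; ring]. Qed.

Lemma csum_opp f n : csum (fun i => (- f i)%C) n = (- csum f n)%C.
Proof. induction n as [|n IH]; simpl; [ring|rewrite IH; ring]. Qed.

Lemma csum_minus f g n : csum (fun i => (f i - g i)%C) n = (csum f n - csum g n)%C.
Proof. induction n as [|n IH]; simpl; [ring|rewrite IH; ring]. Qed.

Lemma csum_Sl f n : csum f (S n) = (f 0%nat + csum (fun i => f (S i)) n)%C.
Proof.
  induction n as [|n IH]; [simpl; ring|].
  change (csum f (S (S n))) with (csum f (S n) + f (S n))%C. rewrite IH. simpl. ring.
Qed.

Lemma csum_add f n m : csum f (n + m) = (csum f n + csum (fun i => f (n + i)%nat) m)%C.
Proof.
  induction m as [|m IH]; [rewrite Nat.add_0_r; simpl; ring|].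
  rewrite Nat.add_succ_r. simpl. rewrite IH. ring.
Qed.

Lemma csum_swap (f : nat -> nat -> C) n m :
  csum (fun i => csum (fun j => f i j) m) n = csum (fun j => csum (fun i => f i j) n) m.
Proof.
  induction n as [|n IH]; simpl.
  - symmetry. now apply csum_eq0.
  - now rewrite IH, <- csum_plus.
Qed.

Lemma RtoC_rsum (f : nat -> R) n : RtoC (rsum f n) = csum (fun i => RtoC (f i)) n.
Proof. induction n as [|n IH]; simpl; [reflexivity|]. now rewrite <- IH, RtoC_plus. Qed.

Lemma Cmod_csum_le f n : Cmod (csum f n) <= rsum (fun i => Cmod (f i)) n.
Proof.
  induction n as [|n IH]; simpl; [rewrite Cmod_0; lra|].
  eapply Rle_trans; [apply Cmod_triangle|]. lra.
Qed.

Lemma rsum_eq0 (f : nat -> R) n : (forall i, (i < n)%nat -> f i = 0) -> rsum f n = 0.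
Proof.
  induction n as [|n IH]; intros H; simpl; [reflexivity|].
  rewrite IH, H by (lia || (intros; apply H; lia)). ring.
Qed.

Lemma rsum_le (f g : nat -> R) n : (forall i, (i < n)%nat -> f i <= g i) -> rsum f n <= rsum g n.
Proof.
  induction n as [|n IH]; intros H; simpl; [lra|].
  apply Rplus_le_compat; [apply IH; intros; apply H|apply H]; lia.
Qed.

Lemma rsum_scal (c : R) (f : nat -> R) n : rsum (fun i => c * f i) n = c * rsum f n.
Proof. induction n as [|n IH]; simpl; [ring|rewrite IH; ring]. Qed.

End FiniteSums.

Lemma csum_split_at (f : nat -> C) (m M : nat) : (m <= M)%nat ->
  csum f M = (csum f m + csum (fun i => f (m + i)%nat) (M - m))%C.
Proof. intros H. rewrite <- csum_add. now replace (m + (M - m))%nat with M by lia. Qed.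

Lemma Cmod_csum_pow_le (x : R) (c : nat -> C) (R0 L : nat) : 0 <= x <= 1 ->
  Cmod (csum (fun i => RtoC (x ^ (R0 + i)) * c i)%C L) <= x ^ R0 * rsum (fun i => Cmod (c i)) L.
Proof.
  intros Hx. eapply Rle_trans; [apply Cmod_csum_le|]. rewrite <- rsum_scal.
  apply rsum_le. intros i _. rewrite Cmod_mult, Cmod_R, Rabs_pos_eq by (apply pow_le; lra).
  apply Rmult_le_compat_r; [apply Cmod_ge_0|].
  rewrite pow_add.
  assert (x ^ i <= 1) by (rewrite <- (pow1 i); apply pow_incr; lra).
  assert (0 <= x ^ R0) by (apply pow_le; lra). nra.
Qed.

Definition is_cderive (f : R -> C) (x : R) (l : C) : Prop :=
  is_derive (fun t => Re (f t)) x (Re l) /\ is_derive (fun t => Im (f t)) x (Im l).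

Section ComplexDerivative.

Variables (f g : R -> C) (x : R) (l m : C).

Lemma is_cderive_ext (f' : R -> C) (l' : C) :
  (forall t, f t = f' t) -> l = l' -> is_cderive f x l -> is_cderive f' x l'.
Proof.
  intros Hf <- [Hre Him]; split;
    [apply (is_derive_ext (fun t => Re (f t)))|apply (is_derive_ext (fun t => Im (f t)))];
    auto; intros t; now rewrite Hf.
Qed.

Lemma is_cderive_plus : is_cderive f x l -> is_cderive g x m ->
  is_cderive (fun t => (f t + g t)%C) x (l + m)%C.
Proof.
  intros [H1 H2] [H3 H4]; split.
  - exact (is_derive_plus (fun t => Re (f t)) (fun t => Re (g t)) _ _ _ H1 H3).
  - exact (is_derive_plus (fun t => Im (f t)) (fun t => Im (g t)) _ _ _ H2 H4).
Qed.

Lemma is_cderive_minus : is_cderive f x l -> is_cderive g x m ->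
  is_cderive (fun t => (f t - g t)%C) x (l - m)%C.
Proof.
  intros [H1 H2] [H3 H4]; split.
  - exact (is_derive_minus (fun t => Re (f t)) (fun t => Re (g t)) _ _ _ H1 H3).
  - exact (is_derive_minus (fun t => Im (f t)) (fun t => Im (g t)) _ _ _ H2 H4).
Qed.

Lemma is_cderive_mult : is_cderive f x l -> is_cderive g x m ->
  is_cderive (fun t => (f t * g t)%C) x (l * g x + f x * m)%C.
Proof.
  intros [H1 H2] [H3 H4].
  assert (Hmul : forall u v a b, is_derive u x a -> is_derive v x b ->
            is_derive (fun t => u t * v t) x (a * v x + u x * b)).
  { intros u v a b Hu Hv. apply (is_derive_mult u v); auto. intros; apply Rmult_comm. }
  split.
  - apply (is_derive_ext (fun t => Re (f t) * Re (g t) - Im (f t) * Im (g t))); [reflexivity|].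
    replace (Re (l * g x + f x * m)%C) with
      ((Re l * Re (g x) + Re (f x) * Re m) - (Im l * Im (g x) + Im (f x) * Im m))
      by (unfold Re, Im; simpl; ring).
    apply (is_derive_minus (fun t => Re (f t) * Re (g t)) (fun t => Im (f t) * Im (g t)));
      apply Hmul; assumption.
  - apply (is_derive_ext (fun t => Re (f t) * Im (g t) + Im (f t) * Re (g t))); [reflexivity|].
    replace (Im (l * g x + f x * m)%C) with
      ((Re l * Im (g x) + Re (f x) * Im m) + (Im l * Re (g x) + Im (f x) * Re m))
      by (unfold Re, Im; simpl; ring).
    apply (is_derive_plus (fun t => Re (f t) * Im (g t)) (fun t => Im (f t) * Re (g t)));
      apply Hmul; assumption.
Qed.

Lemma is_cderive_continuous : is_cderive f x l ->
  continuous (fun t => Re (f t)) x /\ continuous (fun t => Im (f t)) x.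
Proof.
  intros [H1 H2]; split; apply (ex_derive_continuous (K := R_AbsRing) (V := R_NormedModule));
    eexists; eassumption.
Qed.

End ComplexDerivative.

Lemma is_cderive_const (c : C) (x : R) : is_cderive (fun _ => c) x 0%C.
Proof. split; apply (is_derive_const (K := R_AbsRing) (V := R_NormedModule)). Qed.

Lemma is_cderive_linear (a x : R) : is_cderive (fun t => RtoC (a * t)) x (RtoC a).
Proof. split; simpl; auto_derive; trivial; ring. Qed.

Lemma is_cderive_scal (c : C) (f : R -> C) (x : R) (l : C) :
  is_cderive f x l -> is_cderive (fun t => (c * f t)%C) x (c * l)%C.
Proof.
  intros H. eapply is_cderive_ext; [reflexivity| |apply is_cderive_mult; [apply is_cderive_const|exact H]].
  simpl. apply C_ext; simpl; ring.
Qed.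

Definition ccontinuous_on (a b : R) (f : R -> C) : Prop :=
  forall x, a <= x <= b -> continuous (fun t => Re (f t)) x /\ continuous (fun t => Im (f t)) x.

Section ComplexIntegral.

Variables (a b : R).
Hypothesis Hab : a <= b.

Lemma ccontinuous_on_of_cderive (f : R -> C) :
  (forall x, a <= x <= b -> exists l, is_cderive f x l) -> ccontinuous_on a b f.
Proof. intros H x Hx. destruct (H x Hx) as [l Hl]. exact (is_cderive_continuous _ _ _ Hl). Qed.

Lemma ccontinuous_on_ex_RInt (f : R -> C) : ccontinuous_on a b f ->
  ex_RInt (fun t => Re (f t)) a b /\ ex_RInt (fun t => Im (f t)) a b.
Proof.
  intros Hf; split; apply (ex_RInt_continuous (V := R_CompleteNormedModule));
    rewrite Rmin_left, Rmax_right by lra; intros x Hx; apply (Hf x Hx).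
Qed.

Lemma CRInt_FTC (F f : R -> C) : (forall x, a <= x <= b -> is_cderive F x (f x)) ->
  ccontinuous_on a b f -> CRInt f a b = (F b - F a)%C.
Proof.
  intros HD HC. unfold CRInt. apply C_ext; simpl; apply is_RInt_unique;
    [apply (is_RInt_derive (fun t => Re (F t)) (fun t => Re (f t)))
    |apply (is_RInt_derive (fun t => Im (F t)) (fun t => Im (f t)))];
    rewrite Rmin_left, Rmax_right by lra; intros x Hx; apply (HD x Hx) || apply (HC x Hx).
Qed.

Lemma CRInt_plus (f g : R -> C) : ccontinuous_on a b f -> ccontinuous_on a b g ->
  CRInt (fun t => (f t + g t)%C) a b = (CRInt f a b + CRInt g a b)%C.
Proof.
  intros Hf Hg. destruct (ccontinuous_on_ex_RInt f Hf), (ccontinuous_on_ex_RInt g Hg).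
  unfold CRInt. apply C_ext; simpl; now apply (RInt_plus (V := R_CompleteNormedModule)).
Qed.

Lemma RInt_lin_comb (p q : R) (u v : R -> R) : ex_RInt u a b -> ex_RInt v a b ->
  RInt (fun t => p * u t + q * v t) a b = p * RInt u a b + q * RInt v a b.
Proof.
  intros Hu Hv. apply (is_RInt_unique (V := R_CompleteNormedModule)).
  apply (is_RInt_plus (V := R_NormedModule) (fun t => p * u t) (fun t => q * v t));
    apply (is_RInt_scal (V := R_NormedModule)); now apply (RInt_correct (V := R_CompleteNormedModule)).
Qed.

Lemma CRInt_scal (c : C) (f : R -> C) : ccontinuous_on a b f ->
  CRInt (fun t => (c * f t)%C) a b = (c * CRInt f a b)%C.
Proof.
  intros Hf. destruct (ccontinuous_on_ex_RInt f Hf) as [Hre Him].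
  unfold CRInt. apply C_ext; simpl.
  - replace (Re c * _ - Im c * _) with
      (Re c * RInt (fun t => Re (f t)) a b + - Im c * RInt (fun t => Im (f t)) a b) by ring.
    rewrite <- RInt_lin_comb by assumption. apply RInt_ext. intros; unfold Re, Im; simpl; ring.
  - replace (Re c * _ + Im c * _) with
      (Im c * RInt (fun t => Re (f t)) a b + Re c * RInt (fun t => Im (f t)) a b) by ring.
    rewrite <- RInt_lin_comb by assumption. apply RInt_ext. intros; unfold Re, Im; simpl; ring.
Qed.

Lemma CRInt_Cmod_le (f : R -> C) (B : R) : ccontinuous_on a b f ->
  (forall x, a <= x <= b -> Cmod (f x) <= B) -> Cmod (CRInt f a b) <= 2 * ((b - a) * B).
Proof.
  intros Hf HB. destruct (ccontinuous_on_ex_RInt f Hf) as [Hre Him].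
  eapply Rle_trans; [apply Cmod_le_Rabs_re_im|]. unfold CRInt; simpl.
  assert (Hre' := abs_RInt_le_const _ _ _ B Hab Hre).
  assert (Him' := abs_RInt_le_const _ _ _ B Hab Him).
  assert (Rabs (RInt (fun t => Re (f t)) a b) <= (b - a) * B).
  { apply Hre'. intros t Ht. eapply Rle_trans; [apply re_le_Cmod|]. now apply HB. }
  assert (Rabs (RInt (fun t => Im (f t)) a b) <= (b - a) * B).
  { apply Him'. intros t Ht. eapply Rle_trans; [apply im_le_Cmod|]. now apply HB. }
  unfold Re, Im in *; lra.
Qed.

Lemma CRInt_ext_open (f g : R -> C) :
  (forall x, a < x < b -> f x = g x) -> CRInt f a b = CRInt g a b.
Proof.
  intros H. unfold CRInt. f_equal; apply RInt_ext; rewrite Rmin_left, Rmax_right by lra;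
    intros x Hx; now rewrite H.
Qed.

End ComplexIntegral.

Definition kern (k b : C) (z : R) : C := (cexp (k * RtoC (1 - z)) * rcpow z b)%C.

Lemma kern_pos (k b : C) (t : R) : 0 < t ->
  kern k b t = (exp (Re k * (1 - t) + Re b * ln t) * cos (Im k * (1 - t) + Im b * ln t),
                exp (Re k * (1 - t) + Re b * ln t) * sin (Im k * (1 - t) + Im b * ln t)).
Proof.
  intros Ht. unfold kern, rcpow. destruct (Rlt_dec 0 t) as [_|]; [|lra].
  destruct k as [k1 k2], b as [b1 b2]. unfold cexp, Cmult, RtoC; simpl.
  replace (k1 * (1 - t) - k2 * 0) with (k1 * (1 - t)) by ring.
  replace (k1 * 0 + k2 * (1 - t)) with (k2 * (1 - t)) by ring.
  replace (b1 * ln t - b2 * 0) with (b1 * ln t) by ring.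
  replace (b1 * 0 + b2 * ln t) with (b2 * ln t) by ring.
  rewrite exp_plus, cos_plus, sin_plus. apply C_ext; unfold Re, Im; simpl; ring.
Qed.

Lemma kern_nonpos (k b : C) (t : R) : t <= 0 -> kern k b t = 0%C.
Proof.
  intros Ht. unfold kern, rcpow. destruct (Rlt_dec 0 t); [lra|].
  ring.
Qed.

Lemma Cmod_kern (k b : C) (t : R) : 0 < t ->
  Cmod (kern k b t) = exp (Re k * (1 - t) + Re b * ln t).
Proof. intros Ht. rewrite kern_pos by exact Ht. apply Cmod_polar, Rlt_le, exp_pos. Qed.

Lemma kern_1 (k b : C) : kern k b 1 = 1%C.
Proof.
  rewrite kern_pos, ln_1 by lra.
  rewrite Rminus_diag, !Rmult_0_r, Rplus_0_r, exp_0, cos_0, sin_0.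
  apply C_ext; unfold Re, Im; simpl; ring.
Qed.

Lemma kern_pred (k b : C) (t : R) : kern k b t = (t * kern k (b - 1) t)%C.
Proof.
  destruct (Rle_lt_dec t 0) as [Ht|Ht].
  - rewrite !kern_nonpos by exact Ht. ring.
  - rewrite !kern_pos by exact Ht.
    replace (Re k * (1 - t) + Re (b - 1)%C * ln t)
      with ((Re k * (1 - t) + Re b * ln t) + - ln t) by (unfold Re; simpl; ring).
    replace (Im (b - 1)%C) with (Im b) by (unfold Im; simpl; ring).
    rewrite (exp_plus (Re k * (1 - t) + Re b * ln t)), exp_Ropp, exp_ln by exact Ht.
    apply C_ext; unfold Re, Im; simpl; field; lra.
Qed.

(* [rcpow] is glued to 0 on z <= 0; the glued kernel stays differentiable at 0 because it
   vanishes there to order Re b > 1. *)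
Lemma is_derive_0_of_flat (g : R -> R) (c p : R) : 1 < p ->
  (forall h, h <= 0 -> g h = 0) ->
  (forall h, 0 < h -> Rabs (g h) <= exp (c * (1 - h) + p * ln h)) -> is_derive g 0 0.
Proof.
  intros Hp H0 Hb. apply is_derive_Reals. intros eps Heps.
  set (d := Rmin 1 (exp ((ln eps - Rabs c) / (p - 1)))).
  assert (Hd : 0 < d) by (apply Rmin_pos; [lra|apply exp_pos]).
  exists (mkposreal d Hd). intros h Hh0 Hhd. simpl in Hhd.
  rewrite (H0 0), Rplus_0_l, Rminus_0_r by lra.
  destruct (Rle_lt_dec h 0) as [Hh|Hh].
  - rewrite H0 by lra. unfold Rdiv. rewrite Rminus_0_r, Rmult_0_l, Rabs_R0. lra.
  - rewrite Rabs_pos_eq in Hhd by lra.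
    assert (h1 : h < 1) by (apply Rlt_le_trans with d; [lra|apply Rmin_l]).
    assert (Hl : ln h < (ln eps - Rabs c) / (p - 1)).
    { rewrite <- (ln_exp ((ln eps - Rabs c) / (p - 1))). apply ln_increasing; [lra|].
      apply Rlt_le_trans with d; [lra|apply Rmin_r]. }
    assert (Hc : c * (1 - h) <= Rabs c).
    { eapply Rle_trans; [apply RRle_abs|].
      rewrite Rabs_mult, (Rabs_pos_eq (1 - h)) by lra.
      assert (0 <= Rabs c) by apply Rabs_pos. nra. }
    assert (Hq : (p - 1) * ln h < ln eps - Rabs c).
    { apply (Rmult_lt_compat_l (p - 1)) in Hl; [|lra].
      replace ((p - 1) * ((ln eps - Rabs c) / (p - 1))) with (ln eps - Rabs c) in Hl
        by (field; lra). exact Hl. }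
    unfold Rdiv. rewrite Rminus_0_r, Rabs_mult, Rabs_inv, (Rabs_pos_eq h) by lra.
    apply Rle_lt_trans with (exp (c * (1 - h) + p * ln h) * / h).
    + apply Rmult_le_compat_r; [left; apply Rinv_0_lt_compat; lra|apply Hb; lra].
    + replace (c * (1 - h) + p * ln h) with ((c * (1 - h) + (p - 1) * ln h) + ln h) by ring.
      rewrite exp_plus, exp_ln, Rmult_assoc, Rinv_r, Rmult_1_r by lra.
      rewrite <- (exp_ln eps) by lra. apply exp_increasing. lra.
Qed.

Definition kern_derivative (k b : C) (z : R) : C :=
  (- k * kern k b z + b * kern k (b - 1) z)%C.

Lemma kern_deriv_pos (k b : C) (z : R) : 0 < z ->
  is_cderive (kern k b) z (kern_derivative k b z).
Proof.
  intros Hz.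
  assert (Hnear : locally z (fun t => 0 < t)).
  { exists (mkposreal z Hz). intros y Hy. unfold ball in Hy; simpl in Hy.
    unfold AbsRing_ball, abs, minus, plus, opp in Hy; simpl in Hy. apply Rabs_lt_between in Hy. lra. }
  unfold kern_derivative. rewrite !kern_pos by exact Hz.
  replace (Re (b - 1)%C) with (Re b - 1) by (unfold Re; simpl; ring).
  replace (Im (b - 1)%C) with (Im b) by (unfold Im; simpl; ring).
  rewrite Rmult_minus_distr_r, Rmult_1_l.
  replace (Re k * (1 - z) + (Re b * ln z - ln z))
    with ((Re k * (1 - z) + Re b * ln z) + - ln z) by ring.
  rewrite (exp_plus (Re k * (1 - z) + Re b * ln z)), exp_Ropp, exp_ln by exact Hz.
  split.
  - apply (is_derive_ext_loc (fun t => exp (Re k * (1 - t) + Re b * ln t)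
                                       * cos (Im k * (1 - t) + Im b * ln t))).
    { eapply filter_imp; [|exact Hnear]. intros t Ht. now rewrite (kern_pos _ _ t Ht). }
    destruct k as [k1 k2], b as [b1 b2]; unfold Re, Im; simpl.
    auto_derive; [lra|]. replace (1 + - z) with (1 - z) by ring. field. lra.
  - apply (is_derive_ext_loc (fun t => exp (Re k * (1 - t) + Re b * ln t)
                                       * sin (Im k * (1 - t) + Im b * ln t))).
    { eapply filter_imp; [|exact Hnear]. intros t Ht. now rewrite (kern_pos _ _ t Ht). }
    destruct k as [k1 k2], b as [b1 b2]; unfold Re, Im; simpl.
    auto_derive; [lra|]. replace (1 + - z) with (1 - z) by ring. field. lra.
Qed.

Lemma kern_deriv_neg (k b : C) (z : R) : z < 0 ->
  is_cderive (kern k b) z (kern_derivative k b z).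
Proof.
  intros Hz. unfold kern_derivative. rewrite !kern_nonpos by lra.
  replace (- k * 0 + b * 0)%C with (RtoC 0) by (ring).
  assert (Hnear : locally z (fun t => t < 0)).
  { assert (Hz' : 0 < - z) by lra. exists (mkposreal _ Hz'). intros y Hy. unfold ball in Hy; simpl in Hy.
    unfold AbsRing_ball, abs, minus, plus, opp in Hy; simpl in Hy. apply Rabs_lt_between in Hy. lra. }
  split; apply (is_derive_ext_loc (fun _ => 0));
    try (eapply filter_imp; [|exact Hnear]; intros t Ht; now rewrite kern_nonpos by lra);
    apply (is_derive_const (K := R_AbsRing) (V := R_NormedModule)).
Qed.

Lemma kern_deriv_0 (k b : C) : 1 < Re b -> is_cderive (kern k b) 0 (kern_derivative k b 0).
Proof.
  intros Hb. unfold kern_derivative. rewrite !kern_nonpos by lra.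
  replace (- k * 0 + b * 0)%C with (RtoC 0) by (ring).
  split; apply (is_derive_0_of_flat _ (Re k) (Re b) Hb);
    try (intros h Hh; now rewrite kern_nonpos).
  - intros h Hh. rewrite <- Cmod_kern by exact Hh. apply re_le_Cmod.
  - intros h Hh. rewrite <- Cmod_kern by exact Hh. apply im_le_Cmod.
Qed.

Lemma kern_deriv (k b : C) (z : R) : 1 < Re b ->
  is_cderive (kern k b) z (kern_derivative k b z).
Proof.
  intros Hb. destruct (Rtotal_order z 0) as [Hz|[->|Hz]].
  - now apply kern_deriv_neg.
  - now apply kern_deriv_0.
  - now apply kern_deriv_pos.
Qed.

(** * Repeated integration by parts *)

(* Chosen so that d/dz (kern k (a - j) p_j) = kern k (a - j - 1) p_(j+1) + (n - k) kern k (a - j) p_j,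
   using p_j' = - n j p_(j-1). *)
Fixpoint ibp_poly (n : R) (a : C) (j : nat) (z : R) : C :=
  match j with
  | O => 1%C
  | S j' => ((a - INR j' - RtoC (n * z)) * ibp_poly n a j' z
             - RtoC (n * INR j' * z) * match j' with O => 0%C | S j'' => ibp_poly n a j'' z end)%C
  end.

Lemma ibp_poly_S (n : R) (a : C) (j : nat) (z : R) :
  ibp_poly n a (S j) z = ((a - INR j - RtoC (n * z)) * ibp_poly n a j z
                          - RtoC (n * INR j * z) * ibp_poly n a (pred j) z)%C.
Proof.
  destruct j as [|j]; [|reflexivity].
  simpl. rewrite !Rmult_0_r, Rmult_0_l. ring.
Qed.

Lemma is_cderive_recurrence (c : C) (n m : R) (p q : R -> C) (z : R) (dp dq : C) :
  is_cderive p z dp -> is_cderive q z dq ->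
  is_cderive (fun t => ((c - RtoC (n * t)) * p t - RtoC (m * t) * q t)%C) z
    ((c - RtoC (n * z)) * dp - RtoC n * p z - (RtoC (m * z) * dq + RtoC m * q z))%C.
Proof.
  intros Hp Hq.
  eapply is_cderive_ext; [intros; reflexivity| |].
  2:{ apply (is_cderive_minus (fun t => (c - RtoC (n * t)) * p t)%C (fun t => RtoC (m * t) * q t)%C).
      - apply (is_cderive_mult (fun t => c - RtoC (n * t))%C p); [|exact Hp].
        apply (is_cderive_minus (fun _ => c) (fun t => RtoC (n * t)));
          [apply is_cderive_const|apply is_cderive_linear].
      - apply (is_cderive_mult (fun t => RtoC (m * t)) q); [apply is_cderive_linear|exact Hq]. }
  ring.
Qed.

Lemma ibp_poly_deriv (n : R) (a : C) (j : nat) (z : R) :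
  is_cderive (ibp_poly n a j) z (RtoC (- (n * INR j)) * ibp_poly n a (pred j) z)%C.
Proof.
  revert z. induction j as [| |j IH1 IH2] using nat_ind2; intros z.
  - eapply is_cderive_ext; [intros; reflexivity| |apply is_cderive_const].
    apply C_ext; unfold Re, Im; simpl; ring.
  - eapply is_cderive_ext; [intros t; symmetry; apply ibp_poly_S| |].
    2:{ apply is_cderive_recurrence; exact (is_cderive_const 1%C z). }
    simpl. apply C_ext; unfold Re, Im; simpl; ring.
  - eapply is_cderive_ext; [intros t; symmetry; apply ibp_poly_S| |].
    2:{ apply is_cderive_recurrence; [apply IH2|apply IH1]. }
    simpl pred. rewrite (ibp_poly_S n a j z), !S_INR, !RtoC_opp, !RtoC_mult, !RtoC_plus. ring.
Qed.

Definition ibp_integrand (k a : C) (n : R) (j : nat) (z : R) : C :=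
  (kern k (a - INR j) z * ibp_poly n a j z)%C.

Section IntegrationByParts.

Variables (k a : C) (n : R).

Let Y := ibp_integrand k a n.

Lemma ibp_integrand_deriv (j : nat) (z : R) : 1 < Re a - INR j ->
  is_cderive (Y j) z (Y (S j) z + (n - k) * Y j z)%C.
Proof.
  intros Ha. unfold Y, ibp_integrand.
  eapply is_cderive_ext; [intros; reflexivity| |].
  2:{ apply (is_cderive_mult (kern k (a - INR j)) (ibp_poly n a j));
        [apply kern_deriv|apply ibp_poly_deriv].
      unfold Re in *; simpl; lra. }
  unfold kern_derivative. rewrite (kern_pred k (a - INR j) z), ibp_poly_S.
  replace (a - INR (S j))%C with (a - INR j - 1)%C
    by (rewrite S_INR; apply C_ext; unfold Re, Im; simpl; ring).
  rewrite RtoC_opp, !RtoC_mult. ring.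
Qed.

Lemma ibp_integrand_ccontinuous (j : nat) : 1 < Re a - INR j -> ccontinuous_on 0 1 (Y j).
Proof.
  intros Ha. apply ccontinuous_on_of_cderive. intros x _. eexists.
  now apply ibp_integrand_deriv.
Qed.

Lemma ibp_step (j : nat) : 1 < Re a - INR (S j) ->
  ibp_poly n a j 1 = (CRInt (Y (S j)) 0 1 + (n - k) * CRInt (Y j) 0 1)%C.
Proof.
  intros Ha. rewrite S_INR in Ha.
  assert (HD : forall x, is_cderive (Y j) x (Y (S j) x + (n - k) * Y j x)%C)
    by (intros; apply ibp_integrand_deriv; lra).
  assert (HC : ccontinuous_on 0 1 (Y j)) by (apply ibp_integrand_ccontinuous; lra).
  assert (HCS : ccontinuous_on 0 1 (Y (S j)))
    by (apply ibp_integrand_ccontinuous; rewrite S_INR; lra).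
  assert (HCk : ccontinuous_on 0 1 (fun x => (n - k) * Y j x)%C).
  { apply ccontinuous_on_of_cderive. intros x _. eexists. apply is_cderive_scal, HD. }
  rewrite <- (CRInt_scal 0 1 ltac:(lra)), <- (CRInt_plus 0 1 ltac:(lra)) by assumption.
  rewrite (CRInt_FTC 0 1 ltac:(lra) (Y j)); [| intros; apply HD |].
  - unfold Y, ibp_integrand. rewrite kern_1, kern_nonpos by lra. ring.
  - apply ccontinuous_on_of_cderive. intros x _. eexists.
    apply is_cderive_plus; [apply ibp_integrand_deriv; rewrite S_INR; lra|apply is_cderive_scal, HD].
Qed.

Lemma ibp_expansion (M : nat) : (n - k)%C <> 0%C -> 1 < Re a - INR M ->
  CRInt (Y 0) 0 1 =
    (csum (fun j => RtoC ((-1) ^ j) * ibp_poly n a j 1 / (n - k) ^ S j) M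
     + RtoC ((-1) ^ M) * CRInt (Y M) 0 1 / (n - k) ^ M)%C.
Proof.
  intros Hc. induction M as [|M IH]; intros HM.
  - simpl. field.
  - rewrite S_INR in HM. rewrite IH by lra. simpl csum.
    assert (Hstep := ibp_step M ltac:(rewrite S_INR; lra)).
    assert (Hp := Cpow_nz _ M Hc).
    replace (CRInt (Y M) 0 1) with ((ibp_poly n a M 1 - CRInt (Y (S M)) 0 1) / (n - k))%C
      by (rewrite Hstep; field; exact Hc).
    simpl. rewrite RtoC_mult. field. split; assumption.
Qed.

End IntegrationByParts.

Definition ibp_integral (n : R) (w v : C) (j : nat) : C :=
  CRInt (ibp_integrand (n * w) (n + v) n j) 0 1.

Definition ibp_remainder (n : R) (w v : C) (M : nat) : C :=
  (n * w * (RtoC ((-1) ^ M) * ibp_integral n w v M / (n - n * w) ^ M))%C.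

Lemma S_fun_ibp_integral (n : R) (w v : C) :
  S_fun n w v = (1 + n * w * ibp_integral n w v 0)%C.
Proof.
  unfold S_fun, ibp_integral. do 2 f_equal. apply CRInt_ext_open; [lra|]. intros z _.
  unfold ibp_integrand, kern. simpl ibp_poly.
  change (INR 0) with 0. replace (n + v - 0)%C with (n + v)%C by ring. ring.
Qed.

Lemma S_fun_expansion (n : R) (w v : C) (M : nat) :
  (n - n * w)%C <> 0%C -> 1 < n + Re v - INR M ->
  S_fun n w v =
    (1 + n * w * csum (fun j => RtoC ((-1) ^ j) * ibp_poly n (n + v) j 1 / (n - n * w) ^ S j) M
       + ibp_remainder n w v M)%C.
Proof.
  intros Hc HM. rewrite S_fun_ibp_integral. unfold ibp_remainder, ibp_integral.
  rewrite (ibp_expansion (n * w) (n + v) n M Hc) by (unfold Re in *; simpl; lra).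
  ring.
Qed.

(** * Size of the remainder *)

Lemma ln_le_quadratic (z : R) : 0 < z <= 1 -> ln z <= - (1 - z) - (1 - z) ^ 2 / 2.
Proof.
  intros Hz. destruct (Req_dec z 1) as [->|Hz1]; [rewrite ln_1; lra|].
  assert (H := MVT_gen (fun t => ln t + (1 - t) + (1 - t) ^ 2 / 2) z 1
                 (fun t => / t - 1 - (1 - t))).
  cbv zeta in H. rewrite Rmin_left, Rmax_right in H by lra.
  destruct H as [c [Hc Heq]].
  - intros x Hx. auto_derive; [lra|]. field. lra.
  - intros x Hx. apply continuity_pt_filterlim.
    apply (ex_derive_continuous (K := R_AbsRing) (V := R_NormedModule)
             (fun t => ln t + (1 - t) + (1 - t) ^ 2 / 2)). auto_derive. lra.
  - rewrite ln_1 in Heq.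
    assert (Hd : 0 <= / c - 1 - (1 - c)).
    { replace (/ c - 1 - (1 - c)) with ((1 - c) ^ 2 / c) by (field; lra).
      apply Rdiv_le_0_compat; [nra|lra]. }
    nra.
Qed.

Lemma exp_le_compat (x y : R) : x <= y -> exp x <= exp y.
Proof. intros [H|H]; [now left; apply exp_increasing|subst; lra]. Qed.

Lemma pow_le_exp_mul (y : R) (M : nat) : 0 <= y -> y ^ M <= exp (INR M * y).
Proof.
  intros Hy. induction M as [|M IH]; [simpl; rewrite Rmult_0_l, exp_0; lra|].
  rewrite S_INR, Rmult_plus_distr_r, Rmult_1_l, exp_plus. simpl.
  assert (y <= exp y) by (generalize (exp_ineq1_le y); lra).
  rewrite Rmult_comm. apply Rmult_le_compat; auto using pow_le.
Qed.

Lemma pow_mul_exp_neg_sqr_le (s : R) (M : nat) : 0 <= s ->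
  s ^ M * exp (- (s ^ 2 / 4)) <= (4 * INR M) ^ M + 1.
Proof.
  intros Hs.
  assert (HE : exp (- (s ^ 2 / 4)) <= 1) by (rewrite <- exp_0; apply exp_le_compat; nra).
  assert (HE0 := exp_pos (- (s ^ 2 / 4))).
  assert (HM := pow_le (4 * INR M) M ltac:(generalize (pos_INR M); lra)).
  destruct (Rle_lt_dec s 1) as [Hs1|Hs1].
  - assert (s ^ M <= 1) by (rewrite <- (pow1 M); apply pow_incr; lra).
    assert (0 <= s ^ M) by (apply pow_le; lra). nra.
  - destruct M as [|M]; [rewrite !pow_O; lra|].
    set (y := s ^ 2 / (4 * INR (S M))).
    assert (HM0 : 0 < INR (S M)) by apply lt_0_INR, Nat.lt_0_succ.
    assert (Hy : 0 <= y) by (apply Rdiv_le_0_compat; nra).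
    assert (Hsq : s ^ S M <= (4 * INR (S M)) ^ S M * y ^ S M).
    { rewrite <- Rpow_mult_distr. apply pow_incr. unfold y. split; [lra|].
      replace (4 * INR (S M) * (s ^ 2 / (4 * INR (S M)))) with (s * s) by (field; lra). nra. }
    assert (Hexp : y ^ S M * exp (- (s ^ 2 / 4)) <= 1).
    { rewrite exp_Ropp. apply (Rmult_le_reg_r (exp (s ^ 2 / 4))); [apply exp_pos|].
      rewrite Rmult_assoc, Rinv_l, Rmult_1_r, Rmult_1_l by (apply Rgt_not_eq, exp_pos).
      replace (s ^ 2 / 4) with (INR (S M) * y) by (unfold y; field; lra).
      now apply pow_le_exp_mul. }
    assert (0 <= y ^ S M) by now apply pow_le.
    apply Rle_trans with ((4 * INR (S M)) ^ S M * (y ^ S M * exp (- (s ^ 2 / 4)))).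
    + rewrite <- Rmult_assoc. apply Rmult_le_compat_r; lra.
    + rewrite <- (Rmult_1_r ((4 * INR (S M)) ^ S M)) at 2. nra.
Qed.

Definition gauss_const (b : R) (M : nat) : R := (2 * b) ^ M + 2 ^ M * ((4 * INR M) ^ M + 1).

Lemma shifted_pow_mul_exp_neg_sqr_le (s b : R) (M : nat) : 0 <= s -> 0 <= b ->
  (s + b) ^ M * exp (- (s ^ 2 / 4)) <= gauss_const b M.
Proof.
  intros Hs Hb. unfold gauss_const.
  assert (HE : exp (- (s ^ 2 / 4)) <= 1) by (rewrite <- exp_0; apply exp_le_compat; nra).
  assert (HE0 := exp_pos (- (s ^ 2 / 4))).
  assert (H2b : 0 <= (2 * b) ^ M) by (apply pow_le; lra).
  assert (H2 : 0 <= 2 ^ M) by (apply pow_le; lra).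
  assert (Hg := pow_mul_exp_neg_sqr_le s M Hs).
  destruct (Rle_lt_dec s b) as [H|H].
  - assert ((s + b) ^ M <= (2 * b) ^ M) by (apply pow_incr; lra).
    assert (0 <= (s + b) ^ M) by (apply pow_le; lra).
    assert (0 <= (4 * INR M) ^ M + 1) by (generalize (pow_le (4 * INR M) M ltac:(generalize (pos_INR M); lra)); lra).
    nra.
  - assert ((s + b) ^ M <= 2 ^ M * s ^ M) by (rewrite <- Rpow_mult_distr; apply pow_incr; lra).
    apply Rle_trans with (2 ^ M * (s ^ M * exp (- (s ^ 2 / 4)))).
    + rewrite <- Rmult_assoc. apply Rmult_le_compat_r; lra.
    + assert (2 ^ M * (s ^ M * exp (- (s ^ 2 / 4))) <= 2 ^ M * ((4 * INR M) ^ M + 1))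
        by (apply Rmult_le_compat_l; lra). lra.
Qed.

Fixpoint ibp_poly_const (j : nat) : R :=
  match j with
  | O => 1
  | S j' => (INR j' + 1) * ibp_poly_const j'
            + INR j' * match j' with O => 0 | S j'' => ibp_poly_const j'' end
  end.

Lemma ibp_poly_const_S (j : nat) :
  ibp_poly_const (S j) = (INR j + 1) * ibp_poly_const j + INR j * ibp_poly_const (pred j).
Proof. destruct j; [simpl; ring|reflexivity]. Qed.

Lemma ibp_poly_const_nonneg (j : nat) : 0 <= ibp_poly_const j.
Proof.
  induction j as [| |j IH1 IH2] using nat_ind2; [simpl; lra|simpl; lra|].
  rewrite ibp_poly_const_S. simpl pred. generalize (pos_INR (S j)). nra.
Qed.

Section IbpPolyBound.

Variables (n z : R) (v : C).
Hypotheses (Hn : 0 <= n) (Hz : 0 <= z <= 1).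

Let B := n * (1 - z) + Cmod v + sqrt n + 1.

Lemma Cmod_ibp_poly_step (j : nat) :
  Cmod (ibp_poly n (n + v) j z) <= ibp_poly_const j * B ^ j ->
  Cmod (ibp_poly n (n + v) (pred j) z) <= ibp_poly_const (pred j) * B ^ pred j ->
  Cmod (ibp_poly n (n + v) (S j) z) <= ibp_poly_const (S j) * B ^ S j.
Proof.
  intros IH IHp.
  assert (Hsq := sqrt_pos n). assert (Hv := Cmod_ge_0 v). assert (Hj := pos_INR j).
  assert (HB1 : 1 <= B) by (unfold B; nra).
  assert (HBn : n <= B ^ 2).
  { rewrite <- (pow2_sqrt n) by lra. apply pow_incr. unfold B; split; [lra|nra]. }
  assert (Hlin : Cmod (n + v - INR j - RtoC (n * z))%C <= B + INR j).
  { replace (n + v - INR j - RtoC (n * z))%C with (RtoC (n * (1 - z) - INR j) + v)%C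
      by (rewrite RtoC_minus, !RtoC_mult, RtoC_minus; ring).
    eapply Rle_trans; [apply Cmod_triangle|]. rewrite Cmod_R.
    assert (Rabs (n * (1 - z) - INR j) <= n * (1 - z) + INR j) by (apply Rabs_le; nra).
    unfold B. lra. }
  assert (Hquad : Cmod (RtoC (n * INR j * z)) <= B ^ 2 * INR j).
  { rewrite Cmod_R, Rabs_pos_eq by (apply Rmult_le_pos; [apply Rmult_le_pos|]; lra).
    assert (0 <= n * INR j) by nra. nra. }
  assert (Hc := ibp_poly_const_nonneg j). assert (Hcp := ibp_poly_const_nonneg (pred j)).
  assert (HBj : 0 <= B ^ j) by (apply pow_le; lra).
  rewrite ibp_poly_S, ibp_poly_const_S.
  eapply Rle_trans; [apply Cmod_sub_le|]. rewrite !Cmod_mult, Rmult_plus_distr_r.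
  apply Rplus_le_compat.
  - apply Rle_trans with ((B + INR j) * (ibp_poly_const j * B ^ j));
      [apply Rmult_le_compat; auto using Cmod_ge_0|].
    replace ((INR j + 1) * ibp_poly_const j * B ^ S j)
      with (((INR j + 1) * B) * (ibp_poly_const j * B ^ j)) by (simpl; ring).
    apply Rmult_le_compat_r; [apply Rmult_le_pos|]; nra.
  - apply Rle_trans with (B ^ 2 * INR j * (ibp_poly_const (pred j) * B ^ pred j));
      [apply Rmult_le_compat; auto using Cmod_ge_0|].
    destruct j as [|j]; [simpl; lra|]. simpl pred. right. simpl. ring.
Qed.

Lemma Cmod_ibp_poly_le (j : nat) :
  Cmod (ibp_poly n (n + v) j z) <= ibp_poly_const j * B ^ j.
Proof.
  induction j as [| |j IH1 IH2] using nat_ind2.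
  - simpl. rewrite Cmod_1. lra.
  - apply Cmod_ibp_poly_step; simpl; rewrite Cmod_1; lra.
  - now apply Cmod_ibp_poly_step.
Qed.

End IbpPolyBound.

Lemma ibp_poly_base_le (n z : R) (v : C) : 1 <= n -> 0 <= z <= 1 ->
  n * (1 - z) + Cmod v + sqrt n + 1 <= sqrt n * (sqrt n * (1 - z) + (Cmod v + 2)).
Proof.
  intros Hn Hz.
  assert (Hsq1 : 1 <= sqrt n) by (rewrite <- sqrt_1; apply sqrt_le_1_alt; lra).
  assert (Hv := Cmod_ge_0 v).
  replace (n * (1 - z)) with (sqrt n * (sqrt n * (1 - z)))
    by (rewrite <- Rmult_assoc, sqrt_sqrt by lra; reflexivity).
  assert (0 <= sqrt n * (1 - z)) by (apply Rmult_le_pos; lra). nra.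
Qed.

Lemma Cmod_kern_le (n : R) (w v : C) (M : nat) (z : R) :
  0 <= n -> Re w <= 1 -> 2 * (INR M + Cmod v) <= n -> 0 < z <= 1 ->
  Cmod (kern (n * w) (n + v - INR M) z)
    <= exp (INR M + Cmod v) * exp (- (n * (1 - z) ^ 2 / 4)).
Proof.
  intros Hn Hw HM Hz. rewrite Cmod_kern, <- exp_plus by lra. apply exp_le_compat.
  assert (Hl := ln_le_quadratic z Hz). assert (Hl0 : ln z <= 0) by nra.
  assert (Hv : - Cmod v <= Re v) by (generalize (re_le_Cmod v), (Rabs_maj2 (Re v)); lra).
  assert (HM0 := pos_INR M). assert (Hv0 := Cmod_ge_0 v).
  replace (Re (n * w)%C) with (n * Re w) by (unfold Re; simpl; ring).
  replace (Re (n + v - INR M)%C) with (n + Re v - INR M) by (unfold Re; simpl; ring).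
  set (m := INR M + Cmod v) in *.
  assert (n * Re w * (1 - z) <= n * (1 - z)) by (apply Rmult_le_compat_r; nra).
  assert ((n + Re v - INR M) * ln z <= (n - m) * ln z) by (unfold m; nra).
  assert ((n - m) * ((1 - z) + ln z) <= (n - m) * (- (1 - z) ^ 2 / 2))
    by (apply Rmult_le_compat_l; nra).
  assert (0 <= (n - 2 * m) * (1 - z) ^ 2) by (apply Rmult_le_pos; [lra|apply pow2_ge_0]).
  assert (0 <= m) by (unfold m; lra). assert (m * (1 - z) <= m) by nra.
  nra.
Qed.

Definition ibp_integrand_const (v : C) (M : nat) : R :=
  ibp_poly_const M * exp (INR M + Cmod v) * gauss_const (Cmod v + 2) M.

Lemma ibp_integrand_const_nonneg (v : C) (M : nat) : 0 <= ibp_integrand_const v M.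
Proof.
  assert (Hv := Cmod_ge_0 v).
  assert (Hg : 0 <= gauss_const (Cmod v + 2) M).
  { eapply Rle_trans; [|apply (shifted_pow_mul_exp_neg_sqr_le 0 (Cmod v + 2) M); lra].
    apply Rmult_le_pos; [apply pow_le; lra|left; apply exp_pos]. }
  unfold ibp_integrand_const. generalize (ibp_poly_const_nonneg M), (exp_pos (INR M + Cmod v)).
  intros. repeat apply Rmult_le_pos; lra.
Qed.

Lemma Cmod_ibp_integrand_le (n : R) (w v : C) (M : nat) (z : R) :
  1 <= n -> Re w <= 1 -> 2 * (INR M + Cmod v) <= n -> 0 <= z <= 1 ->
  Cmod (ibp_integrand (n * w) (n + v) n M z) <= ibp_integrand_const v M * sqrt n ^ M.
Proof.
  intros Hn Hw HM Hz.
  assert (Hconst := ibp_integrand_const_nonneg v M).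
  assert (Hsq : 0 <= sqrt n ^ M) by (apply pow_le, sqrt_pos).
  destruct (Req_dec z 0) as [->|Hz0].
  { unfold ibp_integrand. rewrite kern_nonpos, Cmult_0_l, Cmod_0 by lra. nra. }
  set (s := sqrt n * (1 - z)).
  assert (Hs : 0 <= s) by (unfold s; apply Rmult_le_pos; [apply sqrt_pos|lra]).
  assert (Hkern := Cmod_kern_le n w v M z ltac:(lra) Hw HM ltac:(lra)).
  replace (n * (1 - z) ^ 2) with (s ^ 2) in Hkern
    by (unfold s; rewrite Rpow_mult_distr, pow2_sqrt by lra; reflexivity).
  assert (Hpoly : Cmod (ibp_poly n (n + v) M z)
                  <= ibp_poly_const M * (sqrt n ^ M * (s + (Cmod v + 2)) ^ M)).
  { eapply Rle_trans; [apply Cmod_ibp_poly_le; lra|].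
    apply Rmult_le_compat_l; [apply ibp_poly_const_nonneg|].
    rewrite <- Rpow_mult_distr. apply pow_incr.
    split; [generalize (sqrt_pos n), (Cmod_ge_0 v); nra|now apply ibp_poly_base_le]. }
  assert (Hgauss := shifted_pow_mul_exp_neg_sqr_le s (Cmod v + 2) M Hs
                      ltac:(generalize (Cmod_ge_0 v); lra)).
  set (c := ibp_poly_const M * exp (INR M + Cmod v) * sqrt n ^ M).
  assert (Hc : 0 <= c)
    by (unfold c; generalize (ibp_poly_const_nonneg M), (exp_pos (INR M + Cmod v)); intros;
        repeat apply Rmult_le_pos; lra).
  unfold ibp_integrand. rewrite Cmod_mult.
  apply Rle_trans with (c * ((s + (Cmod v + 2)) ^ M * exp (- (s ^ 2 / 4)))).
  - apply Rle_trans with ((exp (INR M + Cmod v) * exp (- (s ^ 2 / 4)))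
                          * (ibp_poly_const M * (sqrt n ^ M * (s + (Cmod v + 2)) ^ M))).
    + apply Rmult_le_compat; auto using Cmod_ge_0.
    + right. unfold c. ring.
  - unfold ibp_integrand_const. replace (_ * gauss_const _ _ * _) with (c * gauss_const (Cmod v + 2) M)
      by (unfold c; ring).
    now apply Rmult_le_compat_l.
Qed.

Lemma Cmod_ibp_integral_le (n : R) (w v : C) (M : nat) :
  Re w <= 1 -> 2 * (INR M + Cmod v) + 2 <= n ->
  Cmod (ibp_integral n w v M) <= 2 * (ibp_integrand_const v M * sqrt n ^ M).
Proof.
  intros Hw HM. assert (HM0 := pos_INR M). assert (Hv := Cmod_ge_0 v).
  unfold ibp_integral.
  replace (2 * (ibp_integrand_const v M * sqrt n ^ M))
    with (2 * ((1 - 0) * (ibp_integrand_const v M * sqrt n ^ M))) by ring.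
  apply CRInt_Cmod_le; [lra| |intros; apply Cmod_ibp_integrand_le; lra].
  apply ibp_integrand_ccontinuous.
  generalize (re_le_Cmod v), (Rabs_maj2 (Re v)). unfold Re; simpl. lra.
Qed.

Lemma Cmod_ibp_remainder_le (n : R) (w v : C) (R0 : nat) :
  Re w <= 1 -> w <> 1%C -> 2 * (INR (2 * R0 + 2) + Cmod v) + 2 <= n ->
  Cmod (ibp_remainder n w v (2 * R0 + 2))
    <= 2 * Cmod w * ibp_integrand_const v (2 * R0 + 2) / Cmod (1 - w) ^ (2 * R0 + 2) / n ^ R0.
Proof.
  intros Hw Hw1 Hn. set (M := (2 * R0 + 2)%nat) in *.
  assert (Hn1 : 1 <= n) by (generalize (pos_INR M), (Cmod_ge_0 v); lra).
  assert (H1w0 := Cminus_eq_contra _ _ (not_eq_sym Hw1)).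
  assert (H1w := proj1 (Cmod_gt_0 _) H1w0).
  assert (Hnw : (n * (1 - w))%C <> 0%C) by (apply Cmult_neq_0; [apply RtoC_neq0; lra|exact H1w0]).
  assert (HK := Cmod_ibp_integral_le n w v M Hw Hn).
  assert (Hsq : sqrt n ^ M = n ^ S R0)
    by (unfold M; replace (2 * R0 + 2)%nat with (2 * S R0)%nat by lia;
        rewrite pow_mult, pow2_sqrt by lra; reflexivity).
  assert (HnM : n ^ M = n ^ R0 * n * n ^ S R0)
    by (unfold M; replace (2 * R0 + 2)%nat with (R0 + S (S R0))%nat by lia;
        rewrite pow_add; simpl; ring).
  assert (Hc := ibp_integrand_const_nonneg v M).
  assert (HnR := pow_lt n R0 ltac:(lra)). assert (HnS := pow_lt n (S R0) ltac:(lra)).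
  assert (Hw0 := Cmod_ge_0 w). assert (Hp := pow_lt _ M H1w).
  unfold ibp_remainder, Cdiv.
  replace (n - n * w)%C with (n * (1 - w))%C by ring.
  rewrite !Cmod_mult, Cmod_inv, Cmod_pow, Cmod_mult, !Cmod_R, pow_1_abs, Rabs_pos_eq
    by (lra || now apply Cpow_nz).
  rewrite Rpow_mult_distr, HnM, Rmult_1_l. rewrite Hsq in HK.
  set (D := n ^ R0 * n * n ^ S R0 * Cmod (1 - w) ^ M).
  assert (HD : 0 < D) by (unfold D; rewrite <- HnM; apply Rmult_lt_0_compat; [apply pow_lt|]; lra).
  apply Rle_trans with (n * Cmod w * (2 * (ibp_integrand_const v M * n ^ S R0)) * / D).
  - rewrite <- Rmult_assoc. apply Rmult_le_compat_r; [left; now apply Rinv_0_lt_compat|].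
    apply Rmult_le_compat_l; [apply Rmult_le_pos|]; lra.
  - right. unfold D. field. repeat split; lra.
Qed.

(** * The boundary values as polynomials in n *)

Lemma ibp_poly_1_S (n : R) (v : C) (j : nat) :
  ibp_poly n (n + v) (S j) 1 =
    ((v - INR j) * ibp_poly n (n + v) j 1 - RtoC (n * INR j) * ibp_poly n (n + v) (pred j) 1)%C.
Proof. rewrite ibp_poly_S, !Rmult_1_r, RtoC_mult. ring. Qed.

(* [ibp_coef v j r] is the coefficient of n ^ (j - r) in the boundary value
   [ibp_poly n (n + v) j 1], a polynomial in n (see [ibp_poly_1_expand]). *)
Fixpoint ibp_coef (v : C) (j r : nat) : C :=
  match j with
  | O => match r with O => 1%C | S _ => 0%C end
  | S j' => match r with
            | O => 0%C
            | S r' => ((v - INR j') * ibp_coef v j' r'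
                       - INR j' * match j' with O => 0%C | S j'' => ibp_coef v j'' r' end)%C
            end
  end.

Lemma ibp_coef_SS (v : C) (j r : nat) :
  ibp_coef v (S j) (S r) = ((v - INR j) * ibp_coef v j r - INR j * ibp_coef v (pred j) r)%C.
Proof. destruct j; [simpl; ring|reflexivity]. Qed.

Lemma ibp_coef_high (v : C) (j r : nat) : (j < r)%nat -> ibp_coef v j r = 0%C.
Proof.
  revert r. induction j as [| |j IH1 IH2] using nat_ind2; intros [|r] Hr; try lia.
  - reflexivity.
  - rewrite ibp_coef_SS. destruct r; [lia|]. simpl. ring.
  - rewrite ibp_coef_SS, IH2, IH1 by lia. ring.
Qed.

Section BoundaryExpansion.

Variables (n : R) (v : C).
Hypothesis Hn : n <> 0.

Let x := / n.

Definition ibp_poly_1_expands (j : nat) : Prop :=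
  forall L, (j < L)%nat ->
    (ibp_poly n (n + v) j 1 * RtoC (x ^ j))%C = csum (fun r => ibp_coef v j r * RtoC (x ^ r))%C L.

Lemma ibp_poly_1_expands_S (j : nat) :
  ibp_poly_1_expands j -> ibp_poly_1_expands (pred j) -> ibp_poly_1_expands (S j).
Proof.
  intros IH IHp [|L] HL; [lia|].
  rewrite csum_Sl. simpl ibp_coef at 1.
  rewrite (csum_ext _ (fun r => (v - INR j) * RtoC x * (ibp_coef v j r * RtoC (x ^ r))
                                - INR j * RtoC x * (ibp_coef v (pred j) r * RtoC (x ^ r)))%C)
    by (intros r _; rewrite ibp_coef_SS; simpl pow; rewrite RtoC_mult; ring).
  unfold Cminus. rewrite csum_plus, csum_opp, !csum_scal, <- IH, <- IHp by lia.
  rewrite ibp_poly_1_S.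
  destruct j as [|j]; simpl pred; simpl pow; rewrite ?RtoC_mult; [|rewrite S_INR, RtoC_plus].
  - rewrite Cmult_0_l. change (INR 0) with 0. ring.
  - unfold x. rewrite RtoC_inv by exact Hn. field. now apply RtoC_neq0.
Qed.

Lemma ibp_poly_1_expands_0 : ibp_poly_1_expands 0.
Proof.
  intros [|L] HL; [lia|]. rewrite csum_Sl, csum_eq0 by (intros; simpl; ring). simpl. ring.
Qed.

Lemma ibp_poly_1_expand (j : nat) : ibp_poly_1_expands j.
Proof.
  induction j as [| |j IH1 IH2] using nat_ind2.
  - exact ibp_poly_1_expands_0.
  - apply ibp_poly_1_expands_S; exact ibp_poly_1_expands_0.
  - now apply ibp_poly_1_expands_S.
Qed.

End BoundaryExpansion.

(** * Generating functions *)

Definition cseries_mul (f g : nat -> C) (N : nat) : C :=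
  csum (fun i => (f i * g (N - i)%nat)%C) (S N).

(* The operator (1 - x) d/dx on coefficient sequences. *)
Definition cseries_D (f : nat -> C) (N : nat) : C :=
  ((INR N + 1) * f (S N) - INR N * f N)%C.

Definition cseries_shift (f : nat -> C) (N : nat) : C :=
  match N with O => 0%C | S N' => f N' end.

Definition cseries_one (N : nat) : C :=
  match N with O => 1%C | S _ => 0%C end.

Lemma cseries_mul_ext (f f' g g' : nat -> C) (N : nat) :
  (forall i, f i = f' i) -> (forall i, g i = g' i) ->
  cseries_mul f g N = cseries_mul f' g' N.
Proof. intros Hf Hg. apply csum_ext. intros. now rewrite Hf, Hg. Qed.

Lemma cseries_mul_scal_l (c : C) (f g : nat -> C) (N : nat) :
  cseries_mul (fun i => c * f i)%C g N = (c * cseries_mul f g N)%C.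
Proof. unfold cseries_mul. rewrite <- csum_scal. apply csum_ext. intros. ring. Qed.

Lemma cseries_mul_scal_r (c : C) (f g : nat -> C) (N : nat) :
  cseries_mul f (fun i => c * g i)%C N = (c * cseries_mul f g N)%C.
Proof. unfold cseries_mul. rewrite <- csum_scal. apply csum_ext. intros. ring. Qed.

Lemma cseries_mul_shift_l (f g : nat -> C) (N : nat) :
  cseries_mul (cseries_shift f) g N = cseries_shift (cseries_mul f g) N.
Proof. destruct N as [|N]; unfold cseries_mul; rewrite csum_Sl; simpl; ring. Qed.

Lemma cseries_mul_shift_r (f g : nat -> C) (N : nat) :
  cseries_mul f (cseries_shift g) N = cseries_shift (cseries_mul f g) N.
Proof.
  destruct N as [|N]; unfold cseries_mul; [simpl; ring|].
  change (csum ?F (S (S N))) with (csum F (S N) + F (S N))%C. cbv beta.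
  rewrite Nat.sub_diag. simpl cseries_shift at 2. rewrite Cmult_0_r, Cplus_0_r.
  apply csum_ext. intros i Hi. now replace (S N - i)%nat with (S (N - i)) by lia.
Qed.

Lemma cseries_mul_one_l (g : nat -> C) (N : nat) : cseries_mul cseries_one g N = g N.
Proof.
  unfold cseries_mul. rewrite csum_Sl, Nat.sub_0_r, csum_eq0 by (intros; simpl; ring).
  simpl. ring.
Qed.

Lemma cseries_D_mul (f g : nat -> C) (N : nat) :
  cseries_D (cseries_mul f g) N =
    (cseries_mul (cseries_D f) g N + cseries_mul f (cseries_D g) N)%C.
Proof.
  unfold cseries_D, cseries_mul.
  set (h := fun i => (f i * g (S N - i)%nat)%C).
  assert (Hsplit : ((INR N + 1) * csum h (S (S N)))%C =
    (csum (fun i => INR i * h i) (S (S N)) + csum (fun i => (INR N + 1 - INR i) * h i) (S (S N)))%C).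
  { rewrite <- csum_plus, <- csum_scal. apply csum_ext. intros. ring. }
  assert (Hlow : (csum (fun i => INR i * h i) (S (S N)) =
                  csum (fun i => (INR i + 1) * (f (S i) * g (N - i)%nat)) (S N))%C).
  { rewrite csum_Sl. simpl INR at 1. rewrite Cmult_0_l, Cplus_0_l.
    apply csum_ext. intros i Hi. unfold h. now rewrite S_INR, RtoC_plus. }
  assert (Hhigh : (csum (fun i => (INR N + 1 - INR i) * h i) (S (S N)) =
                   csum (fun i => (INR N + 1 - INR i) * h i) (S N))%C).
  { change (csum ?F (S (S N))) with (csum F (S N) + F (S N))%C. cbv beta.
    rewrite S_INR, RtoC_plus. ring. }
  change (csum (fun i => (f i * g (S N - i)%nat)%C) (S (S N))) with (csum h (S (S N))).
  rewrite Hsplit, Hlow, Hhigh, <- csum_scal.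
  unfold Cminus. rewrite <- csum_opp, <- !csum_plus.
  apply csum_ext. intros i Hi. unfold h.
  replace (S N - i)%nat with (S (N - i)) by lia.
  rewrite minus_INR, RtoC_minus by lia. ring.
Qed.

(* Coefficients of - log (1 - x) - x. *)
Definition log_tail (N : nat) : C := if (N <=? 1)%nat then 0%C else RtoC (/ INR N).

Fixpoint log_tail_pow (k N : nat) : C :=
  match k with O => cseries_one N | S k' => cseries_mul log_tail (log_tail_pow k') N end.

(* Coefficients of (1 - x) ^ v. *)
Definition binom_series (v : C) (N : nat) : C := (RtoC ((-1) ^ N) * cbinom v N)%C.

Definition log_binom_series (v : C) (k N : nat) : C :=
  cseries_mul (log_tail_pow k) (binom_series v) N.

Lemma cseries_D_one (N : nat) : cseries_D cseries_one N = 0%C.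
Proof. destruct N; unfold cseries_D; simpl; ring. Qed.

Lemma cseries_D_log_tail (N : nat) : cseries_D log_tail N = cseries_shift cseries_one N.
Proof.
  unfold cseries_D, log_tail. destruct N as [|[|N]].
  - simpl; ring.
  - apply C_ext; unfold Re, Im; simpl; field.
  - simpl Nat.leb; cbv iota. simpl cseries_shift. rewrite !S_INR.
    assert (H := pos_INR N). apply C_ext; unfold Re, Im; simpl; field; lra.
Qed.

Lemma cseries_D_log_tail_pow (k N : nat) :
  cseries_D (log_tail_pow (S k)) N = (INR (S k) * cseries_shift (log_tail_pow k) N)%C.
Proof.
  assert (Hunfold : forall k, log_tail_pow (S k) = cseries_mul log_tail (log_tail_pow k))
    by reflexivity.
  revert N. induction k as [|k IH]; intros N;
    rewrite Hunfold, cseries_D_mul, (cseries_mul_ext _ _ _ _ _ cseries_D_log_tail (fun _ => eq_refl)),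
      cseries_mul_shift_l.
  - rewrite (cseries_mul_ext log_tail log_tail _ (fun i => 0 * cseries_one i)%C N)
      by (reflexivity || (intros; rewrite cseries_D_one; ring)).
    rewrite cseries_mul_scal_r. destruct N as [|N]; simpl cseries_shift; [ring|].
    rewrite cseries_mul_one_l. simpl. ring.
  - rewrite (cseries_mul_ext log_tail log_tail _ (fun i => INR (S k) * cseries_shift (log_tail_pow k) i)%C N)
      by (reflexivity || apply IH).
    rewrite cseries_mul_scal_r, cseries_mul_shift_r.
    destruct N as [|N]; simpl cseries_shift; [ring|].
    rewrite cseries_mul_one_l. change (cseries_mul log_tail (log_tail_pow k) N) with (log_tail_pow (S k) N).
    rewrite (S_INR (S k)), RtoC_plus. ring.
Qed.

Lemma cseries_D_binom_series (v : C) (N : nat) :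
  cseries_D (binom_series v) N = (- v * binom_series v N)%C.
Proof.
  unfold cseries_D, binom_series, cbinom. simpl cfalling.
  rewrite INR_fact_S.
  assert (HF := INR_fact_neq_0 N). assert (HN := pos_INR N).
  change ((-1) ^ S N) with (-1 * (-1) ^ N).
  rewrite !RtoC_mult, RtoC_plus.
  field. split; rewrite <- ?RtoC_plus; intros H; apply RtoC_inj in H; lra.
Qed.

Lemma cseries_D_log_binom_series_0 (v : C) (N : nat) :
  cseries_D (log_binom_series v 0) N = (- v * log_binom_series v 0 N)%C.
Proof.
  unfold log_binom_series. rewrite cseries_D_mul.
  rewrite (cseries_mul_ext (cseries_D (log_tail_pow 0)) (fun i => 0 * cseries_one i)%C
             (binom_series v) (binom_series v))
    by (reflexivity || (intros; rewrite cseries_D_one; ring)).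
  rewrite (cseries_mul_ext (log_tail_pow 0) (log_tail_pow 0)
             (cseries_D (binom_series v)) (fun i => - v * binom_series v i)%C)
    by (reflexivity || apply cseries_D_binom_series).
  rewrite cseries_mul_scal_l, cseries_mul_scal_r. ring.
Qed.

Lemma cseries_D_log_binom_series_S (v : C) (k N : nat) :
  cseries_D (log_binom_series v (S k)) N =
    (INR (S k) * cseries_shift (log_binom_series v k) N - v * log_binom_series v (S k) N)%C.
Proof.
  unfold log_binom_series. rewrite cseries_D_mul.
  rewrite (cseries_mul_ext (cseries_D (log_tail_pow (S k)))
             (fun i => INR (S k) * cseries_shift (log_tail_pow k) i)%C
             (binom_series v) (binom_series v))
    by (reflexivity || apply cseries_D_log_tail_pow).
  rewrite (cseries_mul_ext (log_tail_pow (S k)) (log_tail_pow (S k))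
             (cseries_D (binom_series v)) (fun i => - v * binom_series v i)%C)
    by (reflexivity || apply cseries_D_binom_series).
  rewrite cseries_mul_scal_l, cseries_mul_scal_r, cseries_mul_shift_l.
  destruct N; simpl cseries_shift; ring.
Qed.

Lemma log_tail_pow_low (k N : nat) : (N < 2 * k)%nat -> log_tail_pow k N = 0%C.
Proof.
  revert N. induction k as [|k IH]; intros N HN; [lia|].
  simpl. apply csum_eq0. intros i Hi.
  unfold log_tail. destruct (i <=? 1)%nat eqn:E; [ring|].
  apply Nat.leb_gt in E. rewrite IH by lia. ring.
Qed.

Lemma log_binom_series_low (v : C) (k N : nat) : (N < 2 * k)%nat -> log_binom_series v k N = 0%C.
Proof.
  intros HN. apply csum_eq0. intros i Hi. rewrite log_tail_pow_low by lia. ring.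
Qed.

Definition ibp_coef_closed (v : C) (j k : nat) : C :=
  (RtoC ((-1) ^ (j + k)) * (INR (Factorial.fact j) / INR (Factorial.fact k))
   * log_binom_series v k j)%C.

Lemma ibp_coef_closed_S0 (v : C) (j : nat) :
  ibp_coef_closed v (S j) 0 = ((v - INR j) * ibp_coef_closed v j 0)%C.
Proof.
  assert (HD := cseries_D_log_binom_series_0 v j). unfold cseries_D in HD.
  assert (Hj := INR_plus_1_neq0 j).
  assert (HE : log_binom_series v 0 (S j) =
               ((INR j * log_binom_series v 0 j + - v * log_binom_series v 0 j) / (INR j + 1))%C)
    by (rewrite <- HD; field; exact Hj).
  unfold ibp_coef_closed. rewrite HE, !Nat.add_0_r, INR_fact_S.
  change ((-1) ^ S j) with (-1 * (-1) ^ j).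
  rewrite !RtoC_mult, RtoC_plus.
  assert (HF := RtoC_neq0 _ (INR_fact_neq_0 0)).
  field. split; [exact HF|exact Hj].
Qed.

Lemma ibp_coef_closed_SS (v : C) (j k : nat) :
  ibp_coef_closed v (S j) (S k) =
    ((v - INR j) * ibp_coef_closed v j (S k) - INR j * ibp_coef_closed v (pred j) k)%C.
Proof.
  assert (HD := cseries_D_log_binom_series_S v k j). unfold cseries_D in HD.
  assert (Hj := INR_plus_1_neq0 j). assert (Hk := INR_plus_1_neq0 k).
  assert (HE : log_binom_series v (S k) (S j) =
    ((INR j * log_binom_series v (S k) j
      + (INR (S k) * cseries_shift (log_binom_series v k) j - v * log_binom_series v (S k) j))
     / (INR j + 1))%C) by (rewrite <- HD; field; exact Hj).
  assert (HFk := RtoC_neq0 _ (INR_fact_neq_0 k)).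
  unfold ibp_coef_closed at 1. rewrite HE. unfold ibp_coef_closed.
  destruct j as [|j].
  - simpl cseries_shift. simpl pred. rewrite !Nat.add_0_l.
    replace (1 + S k)%nat with (S (S k)) by lia.
    change ((-1) ^ S (S k)) with (-1 * (-1 * (-1) ^ k)). change ((-1) ^ S k) with (-1 * (-1) ^ k).
    rewrite INR_fact_S, S_INR. simpl (Factorial.fact 1). simpl (Factorial.fact 0). simpl INR.
    rewrite !RtoC_mult, !RtoC_plus. field. split; [exact HFk|exact (RtoC_neq0 _ (INR_fact_neq_0 (S k)))].
  - simpl cseries_shift. simpl pred.
    replace (S (S j) + S k)%nat with (S (S (S (j + k)))) by lia.
    replace (S j + S k)%nat with (S (S (j + k))) by lia.
    change ((-1) ^ S (S (S (j + k)))) with (-1 * (-1 * (-1 * (-1) ^ (j + k)))).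
    change ((-1) ^ S (S (j + k))) with (-1 * (-1 * (-1) ^ (j + k))).
    rewrite (INR_fact_S (S j)), (INR_fact_S j), (INR_fact_S k), !S_INR.
    assert (HFj := RtoC_neq0 _ (INR_fact_neq_0 j)).
    assert (Hj1 : (INR j + 1 + 1)%C <> 0%C)
      by (rewrite <- !RtoC_plus; apply RtoC_neq0; generalize (pos_INR j); lra).
    assert (Hj0 := INR_plus_1_neq0 j).
    rewrite !RtoC_mult, !RtoC_plus. field. repeat split; assumption.
Qed.

Lemma ibp_coef_closed_low (v : C) (j k : nat) : (j < 2 * k)%nat -> ibp_coef_closed v j k = 0%C.
Proof. intros H. unfold ibp_coef_closed. rewrite log_binom_series_low by exact H. ring. Qed.

Lemma ibp_coef_closed_00 (v : C) : ibp_coef_closed v 0 0 = 1%C.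
Proof.
  unfold ibp_coef_closed, log_binom_series, cseries_mul, binom_series, cbinom.
  apply C_ext; unfold Re, Im; simpl; field.
Qed.

Lemma ibp_coef_eq_closed (v : C) (j r : nat) : (r <= j)%nat ->
  ibp_coef v j r = ibp_coef_closed v j (j - r).
Proof.
  revert r. induction j as [| |j IH1 IH2] using nat_ind2; intros [|r] Hr; try lia.
  - symmetry. apply ibp_coef_closed_00.
  - symmetry. apply ibp_coef_closed_low. simpl. lia.
  - rewrite ibp_coef_SS. replace r with 0%nat by lia. simpl.
    rewrite ibp_coef_closed_S0, ibp_coef_closed_00. simpl; ring.
  - symmetry. apply ibp_coef_closed_low. lia.
  - rewrite ibp_coef_SS, (IH2 r) by lia. simpl pred.
    replace (S (S j) - S r)%nat with (S j - r)%nat by lia.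
    destruct (Nat.eq_dec r (S j)) as [->|Hrj].
    + rewrite Nat.sub_diag, (ibp_coef_closed_S0 v (S j)), ibp_coef_high by lia. ring.
    + replace (S j - r)%nat with (S (j - r)) by lia.
      rewrite (ibp_coef_closed_SS v (S j) (j - r)), (IH1 r) by lia. simpl pred. reflexivity.
Qed.

Lemma deMoivre_low (a : nat -> R) (m k : nat) : (m < k)%nat -> deMoivre a m k = 0.
Proof.
  revert m. induction k as [|k IH]; intros m Hm; [lia|].
  simpl. apply rsum_eq0. intros i Hi. rewrite IH by lia. ring.
Qed.

Lemma log_tail_pow_deMoivre (k m : nat) :
  log_tail_pow k (k + m) = RtoC (deMoivre harm_seq m k).
Proof.
  revert m. induction k as [|k IH]; intros m; [destruct m; reflexivity|].
  simpl log_tail_pow. unfold cseries_mul. rewrite !csum_Sl.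
  change (log_tail 0) with (RtoC 0). change (log_tail 1) with (RtoC 0).
  rewrite Nat.add_comm, csum_add.
  rewrite (csum_eq0 (fun i => log_tail (S (S (m + i))) * log_tail_pow k (S (m + k) - S (S (m + i))))%C)
    by (intros i Hi; rewrite log_tail_pow_low by lia; ring).
  simpl deMoivre. rewrite RtoC_rsum.
  rewrite (csum_ext _ (fun i => RtoC (harm_seq (S i) * deMoivre harm_seq (m - S i) k)) m).
  - ring.
  - intros i Hi. replace (S (m + k) - S (S i))%nat with (k + (m - S i))%nat by lia.
    rewrite IH, RtoC_mult. reflexivity.
Qed.

Lemma ibp_coef_closed_expand (v : C) (r k : nat) :
  ibp_coef_closed v (r + k) k =
    (RtoC ((-1) ^ (r + k + k)) * (INR (Factorial.fact (r + k)) / INR (Factorial.fact k))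
     * csum (fun m => RtoC (deMoivre harm_seq m k) * binom_series v (r - m)) (S r))%C.
Proof.
  unfold ibp_coef_closed. f_equal. unfold log_binom_series, cseries_mul.
  replace (S (r + k)) with (k + S r)%nat by lia.
  rewrite csum_add, csum_eq0, Cplus_0_l by (intros i Hi; rewrite log_tail_pow_low by lia; ring).
  apply csum_ext. intros i Hi.
  rewrite log_tail_pow_deMoivre. now replace (r + k - (k + i))%nat with (r - i)%nat by lia.
Qed.

Definition ibp_series_coef (w v : C) (M r : nat) : C :=
  csum (fun j => RtoC ((-1) ^ j) * w * ibp_coef v j r / (1 - w) ^ S j)%C M.

Lemma pow_m1_sign (r m k : nat) : (m <= r)%nat ->
  (-1) ^ (r - m) = - (-1) ^ m * (-1) ^ S (r + k) / ((-1) ^ (r + k) * (-1) ^ (r + k + k)).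
Proof.
  intros Hm. replace r with (m + (r - m))%nat at 2 3 4 by lia.
  set (d := (r - m)%nat).
  assert (HX := pow_m1_sqr m). assert (HY := pow_m1_sqr d). assert (HZ := pow_m1_sqr k).
  assert (HX0 := pow_m1_neq0 m). assert (HY0 := pow_m1_neq0 d). assert (HZ0 := pow_m1_neq0 k).
  change ((-1) ^ S (m + d + k)) with (-1 * (-1) ^ (m + d + k)). rewrite !pow_add.
  set (X := (-1) ^ m) in *. set (Y := (-1) ^ d) in *. set (Z := (-1) ^ k) in *.
  assert (H : Y * ((X * Y * Z) * (X * Y * Z * Z)) = - X * (-1 * (X * Y * Z))).
  { replace (Y * ((X * Y * Z) * (X * Y * Z * Z))) with ((X * X) * (Y * Y) * (Z * Z) * (Y * Z)) by ring.
    replace (- X * (-1 * (X * Y * Z))) with ((X * X) * (Y * Z)) by ring.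
    rewrite HX, HY, HZ. ring. }
  rewrite <- H. field. repeat split; assumption.
Qed.

Lemma ibp_series_coef_support (w v : C) (M r : nat) : (2 * r < M)%nat ->
  ibp_series_coef w v M r =
    csum (fun k => RtoC ((-1) ^ (r + k)) * w * ibp_coef v (r + k) r / (1 - w) ^ S (r + k))%C (S r).
Proof.
  intros HM. unfold ibp_series_coef.
  replace M with (r + (S r + (M - S (2 * r))))%nat by lia.
  rewrite csum_add, csum_eq0 by (intros i Hi; rewrite ibp_coef_high by exact Hi; unfold Cdiv; ring).
  rewrite csum_add.
  match goal with |- context [csum ?F (M - S (2 * r))] => rewrite (csum_eq0 F) end.
  - ring.
  - intros i Hi. rewrite ibp_coef_eq_closed, ibp_coef_closed_low by lia. unfold Cdiv. ring.
Qed.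

Definition U_term (w v : C) (r m k : nat) : C :=
  (RtoC ((-1) ^ m) * cbinom v (r - m)
   * (w / (w - 1) ^ (r + k + 1)
      * RtoC (INR (Factorial.fact (r + k)) / INR (Factorial.fact k) * deMoivre harm_seq m k)))%C.

Lemma U_fun_sub_delta (w v : C) (r : nat) :
  (U_fun r w v - RtoC (if Nat.eqb r 0 then 1 else 0))%C =
    (- csum (fun k => csum (fun m => U_term w v r m k) (S r)) (S r))%C.
Proof.
  unfold U_fun. rewrite <- csum_swap.
  match goal with |- (_ - ?X - _ = _)%C => replace X with
    (csum (fun m => csum (fun k => U_term w v r m k) (S r)) (S r)) end.
  { ring. }
  apply csum_ext. intros m Hm. unfold U_term. rewrite csum_scal.
  replace (S r) with (S m + (r - m))%nat by lia.
  rewrite csum_add.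
  match goal with |- context [csum ?F (r - m)%nat] => rewrite (csum_eq0 F) end.
  - replace (S m + (r - m))%nat with (S r) by lia. ring.
  - intros i Hi. rewrite deMoivre_low by lia. rewrite Rmult_0_r. unfold Cdiv. ring.
Qed.

Lemma ibp_series_term_eq (w v : C) (r k : nat) : w <> 1%C -> (k <= r)%nat ->
  (RtoC ((-1) ^ (r + k)) * w * ibp_coef v (r + k) r / (1 - w) ^ S (r + k))%C =
    (- csum (fun m => U_term w v r m k) (S r))%C.
Proof.
  intros Hw Hk.
  assert (Hw1 := Cminus_eq_contra _ _ Hw).
  rewrite ibp_coef_eq_closed by lia. replace (r + k - r)%nat with k by lia.
  rewrite ibp_coef_closed_expand, Cpow_one_minus.
  set (K := (RtoC ((-1) ^ (r + k)) * w * (RtoC ((-1) ^ (r + k + k))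
             * (INR (Factorial.fact (r + k)) / INR (Factorial.fact k)))
             / (RtoC ((-1) ^ S (r + k)) * (w - 1) ^ S (r + k)))%C).
  transitivity (K * csum (fun m => RtoC (deMoivre harm_seq m k) * binom_series v (r - m)) (S r))%C.
  { unfold K, Cdiv. ring. }
  rewrite <- csum_scal, <- csum_opp. apply csum_ext. intros m Hm. unfold K.
  unfold U_term, binom_series. rewrite (pow_m1_sign r m k) by lia.
  replace (r + k + 1)%nat with (S (r + k)) by lia.
  assert (H1 := pow_m1_neq0 (r + k)). assert (H2 := pow_m1_neq0 (r + k + k)).
  assert (H3 := pow_m1_neq0 (S (r + k))).
  rewrite RtoC_div by (apply Rmult_integral_contrapositive; split; assumption).
  rewrite !RtoC_mult, RtoC_opp, (RtoC_div (INR (Factorial.fact (r + k)))) by apply INR_fact_neq_0.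
  rewrite ?RtoC_mult.
  assert (HP := Cpow_nz _ (S (r + k)) Hw1).
  assert (HF := RtoC_neq0 _ (INR_fact_neq_0 k)).
  field. repeat split; try assumption; apply RtoC_neq0; assumption.
Qed.

Lemma ibp_series_coef_eq_U (w v : C) (M r : nat) : w <> 1%C -> (2 * r < M)%nat ->
  ibp_series_coef w v M r = (U_fun r w v - RtoC (if Nat.eqb r 0 then 1 else 0))%C.
Proof.
  intros Hw HM. rewrite ibp_series_coef_support, U_fun_sub_delta, <- csum_opp by exact HM.
  apply csum_ext. intros k Hk. apply ibp_series_term_eq; [exact Hw|lia].
Qed.

Lemma boundary_sum_expand (n : R) (w v : C) (M : nat) : n <> 0 -> w <> 1%C ->
  (n * w * csum (fun j => RtoC ((-1) ^ j) * ibp_poly n (n + v) j 1 / (n - n * w) ^ S j) M)%C =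
    csum (fun r => RtoC ((/ n) ^ r) * ibp_series_coef w v M r)%C M.
Proof.
  intros Hn Hw.
  assert (Hw1 := Cminus_eq_contra _ _ (not_eq_sym Hw)).
  assert (HnC := RtoC_neq0 n Hn).
  unfold ibp_series_coef. rewrite <- csum_scal.
  transitivity (csum (fun j => csum (fun r => RtoC ((/ n) ^ r)
                  * (RtoC ((-1) ^ j) * w * ibp_coef v j r / (1 - w) ^ S j)) M) M)%C.
  - apply csum_ext. intros j Hj.
    transitivity (RtoC ((-1) ^ j) * w / (1 - w) ^ S j
                  * csum (fun r => ibp_coef v j r * RtoC ((/ n) ^ r)) M)%C.
    + rewrite <- (ibp_poly_1_expand n v Hn j M Hj).
      replace (n - n * w)%C with (n * (1 - w))%C by ring.
      rewrite Cpow_mult_l, <- RtoC_pow, pow_inv, RtoC_inv by (apply pow_nonzero; exact Hn).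
      assert (Hp1 := RtoC_neq0 _ (pow_nonzero n (S j) Hn)).
      assert (Hp2 := RtoC_neq0 _ (pow_nonzero n j Hn)).
      assert (Hp3 := Cpow_nz _ (S j) Hw1).
      change (n ^ S j) with (n * n ^ j). rewrite RtoC_mult.
      field. repeat split; assumption.
    + rewrite <- csum_scal. apply csum_ext. intros r _. unfold Cdiv. ring.
  - rewrite csum_swap. apply csum_ext. intros r _. now rewrite csum_scal.
Qed.

Lemma csum_pow_delta (x : R) (R0 : nat) : (1 <= R0)%nat ->
  csum (fun r => RtoC (x ^ r) * RtoC (if Nat.eqb r 0 then 1 else 0))%C R0 = 1%C.
Proof.
  intros H. destruct R0 as [|R0]; [lia|].
  rewrite csum_Sl, csum_eq0 by (intros; simpl; ring). simpl. ring.
Qed.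

Lemma S_fun_sub_partial_sum (n : R) (w v : C) (R0 M : nat) :
  w <> 1%C -> (1 <= R0)%nat -> (2 * R0 <= M)%nat -> 0 < n -> 1 < n + Re v - INR M ->
  (S_fun n w v - csum (fun j => U_fun j w v / RtoC (n ^ j)) R0)%C =
    (csum (fun i => RtoC ((/ n) ^ (R0 + i)) * ibp_series_coef w v M (R0 + i)) (M - R0)
     + ibp_remainder n w v M)%C.
Proof.
  intros Hw HR0 HM Hn Hv.
  assert (Hnw : (n - n * w)%C <> 0%C).
  { replace (n - n * w)%C with (n * (1 - w))%C by ring.
    apply Cmult_neq_0; [apply RtoC_neq0; lra|exact (Cminus_eq_contra _ _ (not_eq_sym Hw))]. }
  rewrite (S_fun_expansion n w v M Hnw Hv), boundary_sum_expand by (lra || exact Hw).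
  rewrite (csum_split_at _ R0 M) by lia.
  rewrite (csum_ext _ (fun r => RtoC ((/ n) ^ r) * U_fun r w v
                                - RtoC ((/ n) ^ r) * RtoC (if Nat.eqb r 0 then 1 else 0))%C R0)
    by (intros r Hr; rewrite ibp_series_coef_eq_U by (exact Hw || lia); ring).
  rewrite (csum_ext (fun j => U_fun j w v / RtoC (n ^ j))%C (fun r => RtoC ((/ n) ^ r) * U_fun r w v)%C)
    by (intros r _; rewrite pow_inv, RtoC_inv by (apply pow_nonzero; lra); unfold Cdiv; ring).
  rewrite csum_minus, csum_pow_delta by exact HR0.
  ring.
Qed.

Theorem proposition5p1 (w v : C) (hw : Re w <= 1) (hw1 : w <> RtoC 1) (R0 : nat)
  (hR : (1 <= R0)%nat) :
  exists K N : R, forall n : R, N <= n ->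
    Cmod (Cminus (S_fun n w v)
                 (csum (fun j => Cdiv (U_fun j w v) (RtoC (n ^ j))) R0))
    <= K / n ^ R0.
Proof.
  set (M := (2 * R0 + 2)%nat).
  set (CT := rsum (fun i => Cmod (ibp_series_coef w v M (R0 + i))) (M - R0)).
  set (CE := 2 * Cmod w * ibp_integrand_const v M / Cmod (1 - w) ^ M).
  exists (CT + CE), (2 * (INR M + Cmod v) + 2).
  intros n Hn.
  assert (Hn1 : 1 <= n) by (generalize (pos_INR M), (Cmod_ge_0 v); lra).
  assert (Hv : 1 < n + Re v - INR M)
    by (generalize (pos_INR M), (Cmod_ge_0 v), (re_le_Cmod v), (Rabs_maj2 (Re v)); intros; lra).
  rewrite (S_fun_sub_partial_sum n w v R0 M hw1 hR ltac:(unfold M; lia) ltac:(lra) Hv).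
  eapply Rle_trans; [apply Cmod_triangle|].
  unfold Rdiv. rewrite Rmult_plus_distr_r, <- pow_inv.
  apply Rplus_le_compat.
  - rewrite Rmult_comm.
    apply (Cmod_csum_pow_le (/ n) (fun i => ibp_series_coef w v M (R0 + i))).
    split; [apply Rlt_le, Rinv_0_lt_compat; lra|rewrite <- Rinv_1; apply Rinv_le_contravar; lra].
  - rewrite pow_inv. now apply Cmod_ibp_remainder_le.
Qed.
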